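(* Let $n\ge 1$ and $G\in\mathcal{G}_{2n}$ with $F(G)=n-1$. Then the forcing spectrum of $G$ is continuous, i.e. $\{f(G,M): M \text{ a perfect matching of } G\}=\{f(G), f(G)+1,\dots, n-1\}$.
   Context: All graphs are finite and simple. $\mathcal{G}_{2n}$ denotes the set of all graphs with $2n$ vertices that have a perfect matching. For a perfect matching $M$ of $G$, a forcing set of $M$ is a subset $S\subseteq M$ contained in no other perfect matching of $G$; $f(G,M)$ is the minimum size of a forcing set of $M$. $f(G)$ and $F(G)$ are the minimum and maximum of $f(G,M)$ over all perfect matchings $M$ of $G$. The forcing spectrum of $G$ is the set of forcing numbers of all perfect matchings of $G$; it is continuous if it is an integer interval. *)

(* A simple graph is a symmetric irreflexive relation e on a
   finite vertex type T; edges are 2-element vertex sets {x,y} with e x y. *)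
From mathcomp Require Import all_boot.
Set Implicit Arguments. Unset Strict Implicit. Unset Printing Implicit Defensive.

Section Matchings.
Variables (T : finType) (e : rel T).

Definition is_edge (D : {set T}) : bool :=
  [exists x, exists y, (D == [set x; y]) && e x y].

Definition perfect_matching (M : {set {set T}}) : bool :=
  [forall D in M, is_edge D] &&
  [forall v : T, #|[set D in M | v \in D]| == 1].

Definition forcing_set (M S : {set {set T}}) : bool :=
  (S \subset M) &&
  [forall M' : {set {set T}}, (perfect_matching M' && (S \subset M')) ==> (M' == M)].

(* f(G,M): minimum size of a forcing set of M (M itself is one). *)
Definition forcing_number (M : {set {set T}}) : nat :=
  \big[minn/#|M|]_(S : {set {set T}} | forcing_set M S) #|S|.

(* f(G): minimum forcing number over all perfect matchings
   (default #|T| only matters when G has no perfect matching). *)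
Definition min_forcing_number : nat :=
  \big[minn/#|T|]_(M : {set {set T}} | perfect_matching M) forcing_number M.

Definition max_forcing_number : nat :=
  \max_(M : {set {set T}} | perfect_matching M) forcing_number M.

Definition in_forcing_spectrum (k : nat) : Prop :=
  exists M, perfect_matching M /\ forcing_number M = k.

End Matchings.

From HB Require Import structures.
From mathcomp Require Import all_boot zify.
Set Implicit Arguments. Unset Strict Implicit. Unset Printing Implicit Defensive.

(* Let Ms be a perfect matching with forcing number n - 1 = |Ms| - 1.  If two
   edges xx', yy' of Ms lay on no Ms-alternating 4-cycle, Ms minus these two
   edges would already force Ms; so every two edges of Ms span an alternating
   4-cycle ([max_forcing_alternating]).  Switching a perfect matching M along
   an M-alternating 4-cycle raises its forcing number by at most one
   ([switch_forcing]).  Thanks to the 4-cycles of Ms, any perfect matching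
   M <> Ms can be turned, by at most two switches removing no edge of Ms, into
   one with an additional edge of Ms ([path_progress], a case analysis along an
   M/Ms-alternating path); hence every M reaches Ms ([reach_Ms]).  Along such a
   chain from a matching of minimum forcing number up to Ms the forcing number
   climbs in steps of at most one, so it takes every value in between
   ([reach_ivt]).  Perfect matchings are handled through their partner
   function [mate]. *)

(* [minn] is associative and commutative, which gives access to [bigD1]. *)
HB.instance Definition _ := SemiGroup.isComLaw.Build nat minn minnA minnC.

Lemma bigmin_le (I : finType) (P : pred I) (F : I -> nat) x j :
  P j -> \big[minn/x]_(i | P i) F i <= F j.
Proof. by move=> Pj; rewrite (bigD1 j) //= geq_minl. Qed.

Lemma bigmin_attained (I : finType) (P : pred I) (F : I -> nat) x j :
  P j -> F j <= x -> exists2 i, P i & \big[minn/x]_(i | P i) F i = F i.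
Proof.
move=> Pj Fjx; have := @bigmin_le _ _ F x j Pj.
elim/big_ind: _ => [xFj|v w IHv IHw|i Pi _]; last by exists i.
- by exists j => //; apply/eqP; rewrite eqn_leq Fjx xFj.
- by rewrite /minn; case: ltnP => [vw /IHv|wv /IHw].
Qed.

Section PerfectMatchings.
Variables (T : finType) (e : rel T).
Hypotheses (e_sym : symmetric e) (e_irr : irreflexive e).

Local Notation pm := (perfect_matching e).

Lemma is_edgeP D : is_edge e D -> exists u w, D = [set u; w] /\ e u w.
Proof. by case/existsP => u /existsP [w /andP [/eqP -> euw]]; exists u, w. Qed.

Lemma is_edge2 x y : e x y -> is_edge e [set x; y].
Proof. by move=> exy; apply/existsP; exists x; apply/existsP; exists y; rewrite eqxx. Qed.

Lemma edge2P x y : is_edge e [set x; y] -> e x y.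
Proof.
case/is_edgeP => u [w [xy_uw euw]].
have: (u \in [set x; y]) && (w \in [set x; y]) by rewrite xy_uw set21 set22.
have: (x \in [set u; w]) && (y \in [set u; w]) by rewrite -xy_uw set21 set22.
rewrite !inE => /andP [/orP [] /eqP -> /orP [] /eqP ->] /andP [];
  rewrite ?eqxx ?orbb ?orbT // => same1 same2;
  by [rewrite e_sym | move: euw; rewrite (eqP same1) e_irr
      | move: euw; rewrite (eqP same2) e_irr].
Qed.

Lemma pm_edge M D : pm M -> D \in M -> is_edge e D.
Proof. by case/andP => /forall_inP Medge _; apply: Medge. Qed.

Lemma pm_unique M D1 D2 v :
  pm M -> D1 \in M -> D2 \in M -> v \in D1 -> v \in D2 -> D1 = D2.
Proof.
case/andP => _ /forallP /(_ v) /cards1P [D vD] D1M D2M vD1 vD2.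
have : D1 \in [set D] by rewrite -vD inE D1M vD1.
have : D2 \in [set D] by rewrite -vD inE D2M vD2.
by rewrite !inE => /eqP -> /eqP ->.
Qed.

(* The partner of [x] in [M] ([x] itself if [x] is uncovered). *)
Definition mate (M : {set {set T}}) (x : T) : T :=
  odflt x [pick y | [set x; y] \in M].

Lemma mate_in M x : pm M -> [set x; mate M x] \in M.
Proof.
move=> pmM; rewrite /mate; case: pickP => [y //|none].
case/andP: pmM => Medge /forallP /(_ x) /cards1P [D xD].
have : D \in [set D] by rewrite set11.
rewrite -xD inE => /andP [DM xinD].
case/is_edgeP: (forall_inP Medge D DM) => u [w [Duw _]]; move: DM xinD.
rewrite Duw => DM /set2P [xu | xw];
  by [move: (none w); rewrite xu DM | move: (none u); rewrite xw setUC DM].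
Qed.

Lemma mate_edge M x : pm M -> e x (mate M x).
Proof. by move=> pmM; apply/edge2P/(pm_edge pmM)/mate_in. Qed.

Lemma mate_neq M x : pm M -> mate M x != x.
Proof. by move=> pmM; apply: contraTneq (mate_edge x pmM) => ->; rewrite e_irr. Qed.

Lemma mate_uniq M x y : pm M -> [set x; y] \in M -> mate M x = y.
Proof.
move=> pmM xyM.
have E := pm_unique pmM (mate_in x pmM) xyM (set21 _ _) (set21 _ _).
have /set2P [yx | //] : y \in [set x; mate M x] by rewrite E set22.
by move: (edge2P (pm_edge pmM xyM)); rewrite yx e_irr.
Qed.

Lemma mateK M : pm M -> involutive (mate M).
Proof. by move=> pmM x; apply: mate_uniq => //; rewrite setUC mate_in. Qed.

Lemma mate_inj M : pm M -> injective (mate M).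
Proof. by move/mateK/inv_inj. Qed.

Lemma pm_mem_mate M D x : pm M -> D \in M -> x \in D -> D = [set x; mate M x].
Proof. by move=> pmM DM xD; apply: pm_unique pmM DM (mate_in x pmM) xD (set21 _ _). Qed.

Lemma pm_eq_mate M N : pm M -> pm N -> mate M =1 mate N -> M = N.
Proof.
suff sub M' N' : pm M' -> pm N' -> mate M' =1 mate N' -> M' \subset N'.
  by move=> pmM pmN MN; apply/eqP; rewrite eqEsubset !sub // => x; rewrite MN.
move=> pmM pmN MN; apply/subsetP => D DM.
case/is_edgeP: (pm_edge pmM DM) => u [w [Duw _]].
by rewrite (pm_mem_mate pmM DM (_ : u \in D)) ?MN ?mate_in // Duw set21.
Qed.

Lemma pm_sub_eq M N : pm M -> pm N -> M \subset N -> M = N.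
Proof.
move=> pmM pmN MN; apply: pm_eq_mate => // x.
by apply/esym/mate_uniq/(subsetP MN)/mate_in.
Qed.

(* The edges of a perfect matching partition the vertices into pairs. *)
Lemma card_pm M : pm M -> #|T| = #|M|.*2.
Proof.
move=> pmM.
have partM : partition M [set: T].
  apply/and3P; split.
  - apply/eqP/setP => v; rewrite inE; apply/bigcupP.
    by exists [set v; mate M v]; [exact: mate_in | exact: set21].
  - apply/trivIsetP => A B AM BM; apply: contraR => /pred0Pn [v /andP [vA vB]].
    by rewrite (pm_unique pmM AM BM vA vB).
  - apply/negP => /(pm_edge pmM)/is_edgeP [u [w [uw0 _]]].
    by have := set21 u w; rewrite -uw0 inE.
rewrite -cardsT (card_partition partM) -muln2 -sum_nat_const.
apply: eq_bigr => D DM; case/is_edgeP: (pm_edge pmM DM) => u [w [-> euw]].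
by rewrite cards2; case: eqVneq euw => [->|]; rewrite ?e_irr.
Qed.


Lemma forcing_setP (M S : {set {set T}}) : reflect
  (S \subset M /\ forall N, pm N -> S \subset N -> N = M) (forcing_set e M S).
Proof.
apply: (iffP andP) => [[SM /forallP forces] | [SM forces]]; split=> //.
  by move=> N pmN SN; move: (forces N); rewrite pmN SN /= => /eqP.
by apply/forallP => N; apply/implyP => /andP [pmN SN]; rewrite (forces N).
Qed.

Lemma forcing_set_self M : pm M -> forcing_set e M M.
Proof.
by move=> pmM; apply/forcing_setP; split=> // N pmN MN; rewrite (pm_sub_eq pmM pmN).
Qed.

Lemma forcing_number_le M S : forcing_set e M S -> forcing_number e M <= #|S|.
Proof. exact: bigmin_le. Qed.

Lemma forcing_number_attained M :
  pm M -> exists2 S, forcing_set e M S & forcing_number e M = #|S|.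
Proof. by move=> pmM; apply: bigmin_attained (forcing_set_self pmM) _. Qed.

(* Switching [M] along the alternating 4-cycle a-b-c-d: the matching edges
   bc and da are replaced by the edges ab and cd. *)
Definition switch (M : {set {set T}}) (a b c d : T) : {set {set T}} :=
  (M :\ [set b; c] :\ [set d; a]) :|: [set [set a; b]; [set c; d]].

Lemma mem_switch M a b c d D : (D \in switch M a b c d) =
  [|| [&& D != [set d; a], D != [set b; c] & D \in M],
      D == [set a; b] | D == [set c; d]].
Proof. by rewrite !inE. Qed.

Lemma switchS (M1 M2 : {set {set T}}) a b c d :
  M1 \subset M2 -> switch M1 a b c d \subset switch M2 a b c d.
Proof. by move=> sub12; apply/setSU/setSD/setSD. Qed.

Lemma card_switch (S : {set {set T}}) a b c d : ([set b; c] \in S) || ([set d; a] \in S) ->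
  #|switch S a b c d| <= #|S|.+1.
Proof.
move=> hit; have lt_S : #|S :\ [set b; c] :\ [set d; a]| < #|S|.
  case/orP: hit => [bcS | daS].
    exact: leq_ltn_trans (subset_leq_card (subD1set _ _)) (proper_card (properD1 bcS)).
  apply: leq_ltn_trans (proper_card (properD1 daS)).
  by apply: subset_leq_card; apply/subsetP => D; rewrite !inE => /and3P [-> _ ->].
have := cardsUI (S :\ [set b; c] :\ [set d; a]) [set [set a; b]; [set c; d]].
by rewrite cards2 /switch; lia.
Qed.

Lemma set2_neq (x y : T) (D : {set T}) : x \notin D -> [set x; y] != D.
Proof. by apply: contra => /eqP <-; rewrite set21. Qed.

Lemma in_set4 (z a b c d : T) :
  (z \in [set a; b; c; d]) = [|| z == a, z == b, z == c | z == d].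
Proof. by rewrite !inE -!orbA. Qed.

Section Switch.
Variables (M : {set {set T}}) (a b c d : T).
Hypotheses (pmM : pm M) (mate_b : mate M b = c) (mate_d : mate M d = a).
Hypotheses (e_ab : e a b) (e_cd : e c d) (b_neq_d : b != d).

Let mate_a : mate M a = d. Proof. by rewrite -mate_d mateK. Qed.
Let mate_c : mate M c = b. Proof. by rewrite -mate_b mateK. Qed.
Let a_neq_b : a != b. Proof. by apply: contraTneq e_ab => ->; rewrite e_irr. Qed.
Let b_neq_c : b != c. Proof. by rewrite -mate_b eq_sym mate_neq. Qed.
Let c_neq_d : c != d. Proof. by apply: contraTneq e_cd => ->; rewrite e_irr. Qed.
Let d_neq_a : d != a. Proof. by rewrite -mate_d eq_sym mate_neq. Qed.
Let a_neq_c : a != c. Proof. by rewrite -(inj_eq (mate_inj pmM)) mate_a mate_c eq_sym. Qed.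

Let swm x := if x == a then b else if x == b then a
             else if x == c then d else if x == d then c else mate M x.

Let swm_out x : x != a -> x != b -> x != c -> x != d -> swm x = mate M x.
Proof. by rewrite /swm => /negbTE -> /negbTE -> /negbTE -> /negbTE ->. Qed.

Let switch_mem x : [set x; swm x] \in switch M a b c d.
Proof.
rewrite /swm; case: eqVneq => [-> | xa]; first by rewrite mem_switch eqxx orbT.
case: eqVneq => [-> | xb]; first by rewrite mem_switch setUC eqxx orbT.
case: eqVneq => [-> | xc]; first by rewrite mem_switch eqxx !orbT.
case: eqVneq => [-> | xd]; first by rewrite mem_switch setUC eqxx !orbT.
by rewrite mem_switch !set2_neq ?mate_in // !inE negb_or ?xa ?xb ?xc ?xd.
Qed.

Let switch_mem_mate D x :
  D \in switch M a b c d -> x \in D -> D = [set x; swm x].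
Proof.
rewrite mem_switch /swm => /or3P [/and3P [daD bcD DM] xD | /eqP -> | /eqP ->].
- have DE := pm_mem_mate pmM DM xD.
  case: eqVneq => [xa | _]; first by move: daD; rewrite DE xa mate_a setUC eqxx.
  case: eqVneq => [xb | _]; first by move: bcD; rewrite DE xb mate_b eqxx.
  case: eqVneq => [xc | _]; first by move: bcD; rewrite DE xc mate_c setUC eqxx.
  by case: eqVneq => [xd | _] //; move: daD; rewrite DE xd mate_d eqxx.
- case/set2P => ->; first by rewrite eqxx.
  by rewrite eq_sym (negbTE a_neq_b) eqxx setUC.
- case/set2P => ->; first by rewrite eq_sym (negbTE a_neq_c) eq_sym (negbTE b_neq_c) eqxx.
  rewrite (negbTE d_neq_a) eq_sym (negbTE b_neq_d) eq_sym (negbTE c_neq_d).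
  by rewrite eqxx setUC.
Qed.

Lemma switch_pm : pm (switch M a b c d).
Proof.
apply/andP; split.
  apply/forall_inP => D; rewrite mem_switch => /or3P [/and3P [_ _ DM] | /eqP -> | /eqP ->].
  - exact: pm_edge DM.
  - exact: is_edge2.
  - exact: is_edge2.
apply/forallP => v; apply/cards1P; exists [set v; swm v]; apply/setP => D.
rewrite in_set1 in_set; apply/andP/eqP => [[DM vD] | ->]; first exact: switch_mem_mate.
by rewrite switch_mem set21.
Qed.

Let mate_switch x : mate (switch M a b c d) x = swm x.
Proof. exact/mate_uniq/switch_mem/switch_pm. Qed.

Lemma mate_switch_a : mate (switch M a b c d) a = b.
Proof. by rewrite mate_switch /swm eqxx. Qed.

Lemma mate_switch_b : mate (switch M a b c d) b = a.
Proof. by rewrite mate_switch /swm eq_sym (negbTE a_neq_b) eqxx. Qed.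

Lemma mate_switch_out x : x != a -> x != b -> x != c -> x != d ->
  mate (switch M a b c d) x = mate M x.
Proof. by move=> *; rewrite mate_switch swm_out. Qed.

Lemma switch_unique N : pm N -> [set a; b] \in N -> [set c; d] \in N ->
  (forall x, x != a -> x != b -> x != c -> x != d -> mate N x = mate M x) ->
  N = switch M a b c d.
Proof.
move=> pmN abN cdN out; apply: pm_eq_mate => // [|x]; first exact: switch_pm.
rewrite mate_switch /swm.
case: eqVneq => [-> | xa]; first exact: mate_uniq.
case: eqVneq => [-> | xb]; first by apply: mate_uniq; rewrite // setUC.
case: eqVneq => [-> | xc]; first exact: mate_uniq.
case: eqVneq => [-> | xd]; first by apply: mate_uniq; rewrite // setUC.
exact: out.
Qed.

Lemma switch_notin_ab : [set a; b] \notin M.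
Proof. by apply: contraNN b_neq_d => /(mate_uniq pmM); rewrite mate_a => ->. Qed.

(* Every forcing set of M contains one of the two switched edges, since
   otherwise it would also be contained in the switched matching. *)
Lemma forcing_set_meets S :
  forcing_set e M S -> ([set b; c] \in S) || ([set d; a] \in S).
Proof.
case/forcing_setP => SM forcesM; apply/negPn/negP => /norP [bcS daS].
suff switchM : switch M a b c d = M.
  by move: switch_notin_ab; rewrite -{1}switchM mem_switch eqxx orbT.
apply: forcesM switch_pm _; apply/subsetP => D DS.
rewrite mem_switch (subsetP SM) // andbT.
have D_da : D != [set d; a] by apply: contraNneq daS => <-.
have D_bc : D != [set b; c] by apply: contraNneq bcS => <-.
by rewrite D_da D_bc.
Qed.

End Switch.

(* Switching a forcing set of M gives a forcing set of the switched matching: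
   a perfect matching N containing it can be switched back along the same
   4-cycle into a perfect matching containing S, which therefore is M. *)
Lemma forcing_set_switch M S a b c d : pm M -> mate M b = c -> mate M d = a ->
  e a b -> e c d -> b != d -> forcing_set e M S ->
  forcing_set e (switch M a b c d) (switch S a b c d).
Proof.
move=> pmM mate_b mate_d e_ab e_cd b_neq_d /forcing_setP [SM forcesM].
apply/forcing_setP; split=> [|N pmN SN]; first exact: switchS.
have abN : [set a; b] \in N by rewrite (subsetP SN) // mem_switch eqxx orbT.
have cdN : [set c; d] \in N by rewrite (subsetP SN) // mem_switch eqxx !orbT.
have mateN_c : mate N c = d by apply: mate_uniq.
have mateN_a : mate N a = b by apply: mate_uniq.
have e_bc : e b c by rewrite -mate_b mate_edge.
have e_da : e d a by rewrite -mate_d mate_edge.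
have c_neq_a : c != a by rewrite -mate_b -mate_d (inj_eq (mate_inj pmM)).
have back : switch N b c d a = M.
  apply: forcesM (switch_pm pmN mateN_c mateN_a e_bc e_da c_neq_a) _.
  apply/subsetP => D DS; rewrite mem_switch.
  have DM := subsetP SM D DS.
  have D_ab : D != [set a; b].
    by apply: contraTneq DM => ->; apply: switch_notin_ab mate_d b_neq_d.
  have D_cd : D != [set c; d].
    by apply: contraTneq DM => ->; apply: (switch_notin_ab pmM mate_b); rewrite eq_sym.
  rewrite D_ab D_cd /=; case: eqVneq => [-> | D_bc]; first by rewrite /= orbT.
  case: eqVneq => [-> | D_da]; first by rewrite /= orbT.
  by rewrite (subsetP SN) // mem_switch D_bc D_da DS.
apply: (switch_unique pmM mate_b mate_d e_ab e_cd b_neq_d pmN abN cdN).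
move=> x xa xb xc xd; rewrite -back.
by rewrite (mate_switch_out pmN mateN_c mateN_a e_bc e_da c_neq_a).
Qed.

Lemma switch_forcing M a b c d : pm M -> mate M b = c -> mate M d = a ->
  e a b -> e c d -> b != d ->
  forcing_number e (switch M a b c d) <= (forcing_number e M).+1.
Proof.
move=> pmM mate_b mate_d e_ab e_cd b_neq_d.
have [S fS ->] := forcing_number_attained pmM.
have fS' := forcing_set_switch pmM mate_b mate_d e_ab e_cd b_neq_d fS.
apply: leq_trans (forcing_number_le fS') _.
exact: card_switch (forcing_set_meets pmM mate_b mate_d e_ab e_cd b_neq_d fS).
Qed.

Definition alternating_pairs (Ms : {set {set T}}) : Prop :=
  forall x y, y != x -> y != mate Ms x ->
  (e x y && e (mate Ms x) (mate Ms y)) || (e x (mate Ms y) && e (mate Ms x) y).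

Lemma mate_closed M N (Q : {set T}) : pm M -> pm N ->
  {in Q, forall z, mate M z \in Q} ->
  (forall z, z \notin Q -> mate N z = mate M z) ->
  {in Q, forall z, mate N z \in Q}.
Proof.
move=> pmM pmN closedM agree z zQ; apply/negPn/negP => NzQ.
have Mz : mate M (mate N z) = z by rewrite -agree // mateK.
by move: NzQ; rewrite -(mateK pmM (mate N z)) Mz closedM.
Qed.

Lemma four_vertices_forced Ms N x y : pm Ms -> pm N ->
  y != x -> y != mate Ms x ->
  ~~ ((e x y && e (mate Ms x) (mate Ms y)) || (e x (mate Ms y) && e (mate Ms x) y)) ->
  (forall z, z \notin [set x; mate Ms x; y; mate Ms y] -> mate N z = mate Ms z) ->
  N = Ms.
Proof.
move=> pmMs pmN y_x y_x' not_alt agree.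
set x' := mate Ms x in y_x' not_alt agree; set y' := mate Ms y in not_alt agree.
have Ms_x' : mate Ms x' = x by rewrite mateK.
have Ms_y' : mate Ms y' = y by rewrite mateK.
have y'_x : y' != x by rewrite -Ms_x' (inj_eq (mate_inj pmMs)).
have y'_x' : y' != x' by rewrite (inj_eq (mate_inj pmMs)).
have x'_x : x' != x by rewrite mate_neq.
have inQ z : z \in [set x; x'; y; y'] ->
    [|| mate N z == x, mate N z == x', mate N z == y | mate N z == y'].
  move=> zQ; rewrite -in_set4; apply: (mate_closed pmMs pmN _ agree zQ) => {zQ}z.
  by rewrite !in_set4 => /or4P [] /eqP ->; rewrite ?Ms_x' ?Ms_y' eqxx ?orbT.
have Qx : x \in [set x; x'; y; y'] by rewrite in_set4 eqxx.
have Qx' : x' \in [set x; x'; y; y'] by rewrite in_set4 eqxx orbT.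
have Qy : y \in [set x; x'; y; y'] by rewrite in_set4 eqxx !orbT.
have KN := mateK pmN.
have /or4P [] := inQ x Qx; move/eqP => Nx.
- by move: (mate_neq x pmN); rewrite Nx eqxx.
- have Ny : mate N y = y'.
    have /or4P [] := inQ y Qy; move/eqP => Ny //.
    + by move: y_x'; rewrite -Nx -Ny KN eqxx.
    + by move: y_x; rewrite -(KN y) Ny -Nx KN eqxx.
    + by move: (mate_neq y pmN); rewrite Ny eqxx.
  apply: pm_eq_mate => // z; have [zQ | /agree //] := boolP (z \in [set x; x'; y; y']).
  move: zQ; rewrite in_set4 => /or4P [] => /eqP ->;
    by rewrite -?Nx -?Ny ?KN ?Ms_x' ?Ms_y' ?Nx ?Ny.
- have /or4P [] := inQ x' Qx'; move/eqP => Nx'.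
  + by move: y_x'; rewrite -Nx -Nx' KN eqxx.
  + by move: (mate_neq x' pmN); rewrite Nx' eqxx.
  + by move: x'_x; rewrite -(KN x') Nx' -Nx KN eqxx.
  + by case/negP: not_alt; rewrite -{1}Nx -{1}Nx' !mate_edge.
- have /or4P [] := inQ x' Qx'; move/eqP => Nx'.
  + by move: y'_x'; rewrite -Nx -Nx' KN eqxx.
  + by move: (mate_neq x' pmN); rewrite Nx' eqxx.
  + by case/negP: not_alt; rewrite -{2}Nx -{2}Nx' !mate_edge ?orbT.
  + by move: x'_x; rewrite -(KN x') Nx' -Nx KN eqxx.
Qed.

(* A perfect matching with forcing number |Ms| - 1 (the largest possible
   value short of |Ms|) has every two of its edges on an alternating 4-cycle:
   otherwise Ms minus those two edges would already force Ms. *)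
Lemma max_forcing_alternating Ms :
  pm Ms -> #|Ms| <= (forcing_number e Ms).+1 -> alternating_pairs Ms.
Proof.
move=> pmMs big_f x y y_x y_x'; apply/negPn/negP => not_alt.
set S := Ms :\ [set x; mate Ms x] :\ [set y; mate Ms y].
have forcesS : forcing_set e Ms S.
  apply/forcing_setP; split=> [|N pmN SN].
    exact: subset_trans (subD1set _ _) (subD1set _ _).
  apply: (four_vertices_forced pmMs pmN y_x y_x' not_alt) => z.
  rewrite in_set4 !negb_or => /and4P [z_x z_x' z_y z_y'].
  apply: mate_uniq => //; apply: (subsetP SN).
  by rewrite !inE mate_in // !set2_neq // !inE negb_or ?z_x ?z_x' ?z_y ?z_y'.
have card_S : #|Ms| = #|S|.+2.
  rewrite (cardsD1 [set x; mate Ms x]) mate_in //.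
  rewrite (cardsD1 [set y; mate Ms y]) !inE mate_in // set2_neq //.
  by rewrite !inE negb_or y_x y_x'.
by move: big_f; rewrite card_S ltnS ltnNge (forcing_number_le forcesS).
Qed.

Section TowardsMs.
Variable Ms : {set {set T}}.
Hypotheses (pmMs : pm Ms) (Ms_alt : alternating_pairs Ms).

Definition good_switch (M N : {set {set T}}) : Prop :=
  exists a b c d,
    [/\ mate M b = c, mate M d = a, e a b, e c d & b != d] /\
    [/\ mate Ms b != c, mate Ms d != a & N = switch M a b c d].

Inductive reach : {set {set T}} -> {set {set T}} -> Prop :=
  | reach_refl M : reach M M
  | reach_step M N P : good_switch M N -> reach N P -> reach M P.

Lemma good_switch_pm M N : pm M -> good_switch M N -> pm N.
Proof. by move=> pmM [a [b [c [d [[? ? ? ? ?] [_ _ ->]]]]]]; apply: switch_pm. Qed.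

Lemma good_switch_forcing M N : pm M -> good_switch M N ->
  forcing_number e N <= (forcing_number e M).+1.
Proof. by move=> pmM [a [b [c [d [[? ? ? ? ?] [_ _ ->]]]]]]; apply: switch_forcing. Qed.

Lemma good_switch_keeps M N D :
  good_switch M N -> D \in Ms -> D \in M -> D \in N.
Proof.
move=> [a [b [c [d [_ [Ms_b Ms_d ->]]]]]] DMs DM; rewrite mem_switch DM andbT.
have D_bc : D != [set b; c].
  by apply: contraNneq Ms_b => D_bc; apply/eqP/(mate_uniq pmMs); rewrite -D_bc.
have D_da : D != [set d; a].
  by apply: contraNneq Ms_d => D_da; apply/eqP/(mate_uniq pmMs); rewrite -D_da.
by rewrite D_bc D_da.
Qed.

Lemma reach_pm M N : pm M -> reach M N -> pm N.
Proof. by move=> + MN; elim: MN => // {}M {}N P /good_switch_pm MN _ IH /MN. Qed.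

Lemma reach_keeps M N D : reach M N -> D \in Ms -> D \in M -> D \in N.
Proof.
move=> MN DMs; elim: MN => // {}M {}N P MN _ IH DM.
exact/IH/(good_switch_keeps MN).
Qed.

Lemma reach_trans M N P : reach M N -> reach N P -> reach M P.
Proof. by elim=> // {}M {}N Q MN _ IH /IH; apply: reach_step. Qed.

(* Discrete intermediate values: along a chain of good switches the forcing
   number grows by at most one at a time, so it takes every value between
   its values at the two ends. *)
Lemma reach_ivt M N k : pm M -> reach M N ->
  forcing_number e M <= k <= forcing_number e N ->
  exists2 P, pm P & forcing_number e P = k.
Proof.
move=> + MN; elim: MN => [{}M pmM /andP [le1 le2] | {}M {}N P MN _ IH pmM /andP [le1 le2]].
  by exists M => //; apply/eqP; rewrite eqn_leq le1 le2.
have [fM_k | fM_k] := eqVneq (forcing_number e M) k; first by exists M.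
apply: IH; first exact: good_switch_pm MN.
rewrite le2 andbT; apply: leq_trans (good_switch_forcing pmM MN) _.
by rewrite ltn_neqAle fM_k le1.
Qed.

Definition improves (M N : {set {set T}}) : Prop :=
  reach M N /\ exists D, [/\ D \in Ms, D \in N & D \notin M].

Lemma improves_measure M N : improves M N -> #|Ms :\: N| < #|Ms :\: M|.
Proof.
move=> [MN [D [DMs DN DM]]]; apply: proper_card; apply/properP; split.
  apply/subsetP => D'; rewrite !inE => /andP [D'N D'Ms]; rewrite D'Ms andbT.
  by apply: contra D'N; apply: reach_keeps.
by exists D; rewrite !inE ?DN ?DM.
Qed.

Lemma improves_step M N P : good_switch M N -> improves N P -> improves M P.
Proof.
move=> MN [NP [D [DMs DP DN]]]; split; first exact: reach_step NP.
by exists D; split=> //; apply: contra DN; apply: good_switch_keeps.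
Qed.

Lemma switch_improves M a b c d : pm M ->
  mate M b = c -> mate M d = a -> e c d -> b != d -> mate Ms a = b ->
  improves M (switch M a b c d).
Proof.
move=> pmM mate_b mate_d e_cd b_neq_d Ms_a.
have e_ab : e a b by rewrite -Ms_a mate_edge.
have a_neq_c : a != c by rewrite -mate_b -mate_d (inj_eq (mate_inj pmM)) eq_sym.
split; last first.
  exists [set a; b]; split; first by rewrite -Ms_a mate_in.
    by rewrite mem_switch eqxx orbT.
  exact: switch_notin_ab mate_d b_neq_d.
apply: reach_step (reach_refl _); exists a, b, c, d; split=> //; split=> //.
  by rewrite -Ms_a mateK // eq_sym.
by rewrite -(inj_eq (mate_inj pmMs)) Ms_a mateK // eq_sym.
Qed.

(* When the Ms-edge ab (not in M) cannot be created by a single switch, the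
   alternating 4-cycles of Ms provide two "crossing" edges instead. *)
Lemma detour M a b : pm M -> mate Ms a = b -> ~~ e (mate M a) (mate M b) ->
  e (mate M a) (mate Ms (mate M b)) && e (mate Ms (mate M a)) (mate M b).
Proof.
move=> pmM Ms_a no_edge.
have neq1 : mate M b != mate M a by rewrite (inj_eq (mate_inj pmM)) -Ms_a mate_neq.
have neq2 : mate M b != mate Ms (mate M a).
  by apply: contraNneq no_edge => ->; apply: mate_edge.
by move: (Ms_alt neq1 neq2); rewrite (negbTE no_edge).
Qed.

Section AlternatingPath.
(* The alternating path  cm2 -M- cm1 -Ms- c0 -M- c1 -Ms- c2 -M- c3 -Ms- c4 -M- c5
   of M and Ms through an Ms-edge c1c2 missing from M. *)
Variables (M : {set {set T}}) (cm2 cm1 c0 c1 c2 c3 c4 c5 : T).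
Hypothesis pmM : pm M.
Hypotheses (m_c1 : mate M c1 = c0) (s_c1 : mate Ms c1 = c2) (m_c2 : mate M c2 = c3).
Hypotheses (s_c3 : mate Ms c3 = c4) (m_c4 : mate M c4 = c5).
Hypotheses (s_c0 : mate Ms c0 = cm1) (m_cm1 : mate M cm1 = cm2).
Hypothesis c0_c2 : c0 != c2.

Let m_c0 : mate M c0 = c1. Proof. by rewrite -m_c1 mateK. Qed.
Let s_c2 : mate Ms c2 = c1. Proof. by rewrite -s_c1 mateK. Qed.
Let m_c3 : mate M c3 = c2. Proof. by rewrite -m_c2 mateK. Qed.
Let s_c4 : mate Ms c4 = c3. Proof. by rewrite -s_c3 mateK. Qed.
Let s_cm1 : mate Ms cm1 = c0. Proof. by rewrite -s_c0 mateK. Qed.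
Let m_cm2 : mate M cm2 = cm1. Proof. by rewrite -m_cm1 mateK. Qed.

Let minj := inj_eq (mate_inj pmM).
Let sinj := inj_eq (mate_inj pmMs).
Let c0_c1 : c0 != c1. Proof. by rewrite -m_c1 mate_neq. Qed.
Let c1_c2 : c1 != c2. Proof. by rewrite -s_c1 eq_sym mate_neq. Qed.
Let c2_c3 : c2 != c3. Proof. by rewrite -m_c2 eq_sym mate_neq. Qed.
Let c3_c4 : c3 != c4. Proof. by rewrite -s_c3 eq_sym mate_neq. Qed.
Let c1_c3 : c1 != c3. Proof. by rewrite -minj m_c1 m_c3. Qed.
Let c2_c4 : c2 != c4. Proof. by rewrite -sinj s_c2 s_c4. Qed.
Let c3_c5 : c3 != c5. Proof. by rewrite -minj m_c3 -m_c4 mateK. Qed.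
Let c1_c4 : c1 != c4. Proof. by rewrite -sinj s_c1 s_c4. Qed.
Let c2_c5 : c2 != c5. Proof. by rewrite -minj m_c2 -m_c4 mateK. Qed.
Let c0_c3 : c0 != c3. Proof. by rewrite -minj m_c0 m_c3. Qed.
Let cm1_c1 : cm1 != c1. Proof. by rewrite -sinj s_cm1 s_c1. Qed.
Let cm2_c0 : cm2 != c0. Proof. by rewrite -minj m_cm2 m_c0. Qed.
Let cm1_c4 : cm1 != c4. Proof. by rewrite -sinj s_cm1 s_c4. Qed.
Let cm2_c5 : cm2 != c5. Proof. by rewrite -minj m_cm2 -m_c4 mateK. Qed.
Let cm2_c1 : cm2 != c1. Proof. by rewrite -minj m_cm2 m_c1 -s_c0 mate_neq. Qed.
Let cm1_c2 : cm1 != c2. Proof. by rewrite -sinj s_cm1 s_c2. Qed.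
Let cm2_c3 : cm2 != c3. Proof. by rewrite -minj m_cm2 m_c3. Qed.

Let improve_by_one : e c0 c3 || e c2 c5 -> exists N, improves M N.
Proof.
case/orP => [e03 | e25].
  exists (switch M c1 c2 c3 c0).
  by apply: (switch_improves pmM m_c2 m_c0 _ _ s_c1); rewrite 1?e_sym // eq_sym.
exists (switch M c3 c4 c5 c2).
by apply: (switch_improves pmM m_c4 m_c2 _ _ s_c3); rewrite 1?e_sym // eq_sym.
Qed.

(* First exchange c0c1, c4c5 for c0c4, c1c5; then c3c4 or cm1c0 is created. *)
Let improve_via_c0c4 : e c0 c4 -> e c1 c5 -> e c0 c2 || e c4 cm2 ->
  exists N, improves M N.
Proof.
move=> e04 e15 second; set N1 := switch M c0 c4 c5 c1.
have e51 : e c5 c1 by rewrite e_sym.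
have c4_c1 : c4 != c1 by rewrite eq_sym.
have N1_good : good_switch M N1.
  exists c0, c4, c5, c1; split; split=> //; first by rewrite s_c4.
  by rewrite s_c1 eq_sym.
have pmN1 := good_switch_pm pmM N1_good.
have mN1_c4 : mate N1 c4 = c0 := mate_switch_b pmM m_c4 m_c1 e04 e51 c4_c1.
case/orP: second => [e02 | e4m2].
  exists (switch N1 c3 c4 c0 c2); apply: improves_step N1_good _.
  apply: (switch_improves pmN1 mN1_c4 _ e02 _ s_c3); last by rewrite eq_sym.
  by rewrite mate_switch_out // 1?eq_sym // eq_sym.
exists (switch N1 cm1 c0 c4 cm2); apply: improves_step N1_good _.
have mN1_c0 : mate N1 c0 = c4 := mate_switch_a pmM m_c4 m_c1 e04 e51 c4_c1.
have cm2_c4 : cm2 != c4 by apply: contraTneq e4m2 => ->; rewrite e_irr.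
apply: (switch_improves pmN1 mN1_c0 _ e4m2 _ s_cm1); last by rewrite eq_sym.
by rewrite mate_switch_out.
Qed.

(* First exchange cm1cm2, c2c3 for cm1c2, c3cm2; then c1c2 is created. *)
Let improve_via_cm1c2 : e cm1 c2 -> e c3 cm2 -> c3 != cm1 -> exists N, improves M N.
Proof.
move=> em12 e3m2 c3_cm1; set N2 := switch M cm1 c2 c3 cm2.
have c2_cm2 : c2 != cm2 by rewrite -minj m_c2 m_cm2.
have N2_good : good_switch M N2.
  exists cm1, c2, c3, cm2; split; split=> //; first by rewrite s_c2.
  by rewrite -s_c0 sinj.
have pmN2 := good_switch_pm pmM N2_good.
exists (switch N2 cm1 c0 c1 c2); apply: improves_step N2_good _.
have mN2_c2 : mate N2 c2 = cm1 := mate_switch_b pmM m_c2 m_cm2 em12 e3m2 c2_cm2.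
apply: (switch_improves pmN2 _ mN2_c2 _ c0_c2 s_cm1); last by rewrite -s_c1 mate_edge.
rewrite (mate_switch_out pmM m_c2 m_cm2 em12 e3m2 c2_cm2) // eq_sym //.
by rewrite -s_c0 mate_neq.
Qed.

(* Some Ms-edge is always created within two good switches: either directly,
   or via the crossing edges supplied by the alternating 4-cycles of Ms. *)
Lemma path_progress : exists N, improves M N.
Proof.
have [one | /norP [n03 n25]] := boolP (e c0 c3 || e c2 c5); first exact: improve_by_one.
have := detour pmM s_c1; rewrite m_c1 m_c2 s_c3 s_c0 => /(_ n03) /andP [e04 em13].
have := detour pmM s_c3; rewrite m_c3 m_c4 s_c2 => /(_ n25) /andP [e2s5 e15].
have [second | /norP [n02 n4m2]] := boolP (e c0 c2 || e c4 cm2).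
  exact: improve_via_c0c4.
have c2_c0 : c2 != c0 by rewrite eq_sym.
have c2_cm1 : c2 != mate Ms c0 by rewrite s_c0 eq_sym.
have := Ms_alt c2_c0 c2_cm1; rewrite s_c0 s_c2 (negbTE n02) /= => /andP [_ em12].
have cm2_c4 : cm2 != c4.
  apply: contraNneq n02 => cm2_c4; rewrite e_sym; move: e2s5.
  by rewrite -m_c4 -cm2_c4 m_cm2 s_cm1.
have cm2_c3' : cm2 != mate Ms c4 by rewrite s_c4.
have := Ms_alt cm2_c4 cm2_c3'; rewrite s_c4 (negbTE n4m2) /= => /andP [_ e3m2].
apply: improve_via_cm1c2 => //.
by apply: contraNneq n03 => ->; rewrite -s_c0 mate_edge.
Qed.

End AlternatingPath.

Lemma progress M : pm M -> M != Ms -> exists N, improves M N.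
Proof.
move=> pmM M_Ms; have /existsP [c1 c1_free] : [exists x, mate M x != mate Ms x].
  apply: contraR M_Ms => /existsPn agree; apply/eqP/pm_eq_mate => // x.
  by apply/eqP; move: (agree x); rewrite negbK.
by apply: path_progress pmM _ _ _ _ _ _ _ c1_free.
Qed.

Lemma reach_Ms M : pm M -> reach M Ms.
Proof.
move=> pmM; have [n] := ubnP #|Ms :\: M|; elim: n M pmM => // n IH M pmM lt_n.
have [-> | M_Ms] := eqVneq M Ms; first exact: reach_refl.
have [N [MN gain]] := progress pmM M_Ms.
apply: (reach_trans MN (IH N (reach_pm pmM MN) _)).
exact: leq_trans (improves_measure (conj MN gain)) lt_n.
Qed.

End TowardsMs.

Lemma min_forcing_attained : (exists M, pm M) ->
  exists2 M, pm M & forcing_number e M = min_forcing_number e.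
Proof.
move=> [M0 pmM0]; have f_M0 : forcing_number e M0 <= #|T|.
  apply: leq_trans (forcing_number_le (forcing_set_self pmM0)) _.
  by rewrite (card_pm pmM0) -addnn leq_addr.
rewrite /min_forcing_number; have [M pmM ->] := bigmin_attained pmM0 f_M0.
by exists M.
Qed.

Lemma max_forcing_attained : (exists M, pm M) ->
  exists2 M, pm M & forcing_number e M = max_forcing_number e.
Proof.
move=> [M0 pmM0]; exists [arg max_(M > M0 | pm M) forcing_number e M].
  by case: arg_maxnP.
by rewrite /max_forcing_number (bigmax_eq_arg M0).
Qed.

End PerfectMatchings.

Theorem theorem5p9 (n : nat) (T : finType) (e : rel T)
  (e_sym : symmetric e) (e_irr : irreflexive e)
  (n_pos : 1 <= n) (hcard : #|T| = n.*2)
  (has_pm : exists M, perfect_matching e M)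
  (hF : max_forcing_number e = n - 1) :
  forall k : nat,
    in_forcing_spectrum e k <-> min_forcing_number e <= k <= n - 1.
Proof.
move=> k; split.
  case=> M [pmM <-]; rewrite -hF; apply/andP; split; first exact: bigmin_le.
  exact: leq_bigmax_cond.
case/andP => min_k k_max.
have [M0 pmM0 fM0] := min_forcing_attained e_sym e_irr has_pm.
have [Ms pmMs fMs] := max_forcing_attained has_pm.
have card_Ms : #|Ms| = n.
  by apply/eqP; rewrite -(eqn_pmul2l (isT : 0 < 2)) !mul2n -(card_pm e_irr pmMs) hcard.
have Ms_alt : alternating_pairs e Ms.
  by apply: max_forcing_alternating; rewrite // fMs hF card_Ms; lia.
have k_between : forcing_number e M0 <= k <= forcing_number e Ms.
  by rewrite fM0 fMs hF min_k k_max.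
have M0_Ms := reach_Ms e_sym e_irr pmMs Ms_alt pmM0.
have [P pmP fP] := reach_ivt e_sym e_irr pmM0 M0_Ms k_between.
by exists P.
Qed.
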